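(* Let $A$ be a distributive meet-complemented lattice in which $\Box x$ and $\Diamond x$ exist for every $x\in A$ and such that $\Box a\le\Box\Box a$ for all $a\in A$. Then for all $a,b\in A$: (i) $\Box(a\wedge\Diamond b)=\Box a\wedge\Diamond b$; (ii) $\Diamond(a\vee\Box b)=\Diamond a\vee\Box b$; (iii) $\Box(a\vee\Box b)=\Box a\vee\Box b$; (iv) $\Diamond(a\wedge\Diamond b)=\Diamond a\wedge\Diamond b$.
   Context: A meet-complemented lattice is a lattice $(L,\le)$ such that for every $a\in L$ the element $\neg a=\max\{b\in L: a\wedge b\le c\ \text{for all } c\in L\}$ exists; it is bounded with bottom $0$ and top $1$. For $a\in L$, $\Box a=\max\{b\in L: a\vee\neg b=1\}$ and $\Diamond a=\min\{b\in L: \neg a\vee b=1\}$. *)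

From HB Require Import structures.
From mathcomp Require Import all_boot all_order.
Set Implicit Arguments. Unset Strict Implicit. Unset Printing Implicit Defensive.
Import Order.TTheory.
Local Open Scope order_scope.

Definition is_max (d : Order.disp_t) (L : porderType d) (P : L -> Prop) (m : L) :=
  P m /\ forall b, P b -> b <= m.

Definition is_min (d : Order.disp_t) (L : porderType d) (P : L -> Prop) (m : L) :=
  P m /\ forall b, P b -> m <= b.

Definition is_meet_compl (d : Order.disp_t) (L : tbLatticeType d) (neg : L -> L) :=
  forall a : L, is_max (fun b => forall c : L, a `&` b <= c) (neg a).

Definition is_box (d : Order.disp_t) (L : tbLatticeType d) (neg box : L -> L) :=
  forall a : L, is_max (fun b => a `|` neg b = \top) (box a).

Definition is_dia (d : Order.disp_t) (L : tbLatticeType d) (neg dia : L -> L) :=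
  forall a : L, is_min (fun b => neg a `|` b = \top) (dia a).

From HB Require Import structures.
From mathcomp Require Import all_boot all_order.
Import Order.TTheory.
Local Open Scope order_scope.

Set Implicit Arguments. Unset Strict Implicit. Unset Printing Implicit Defensive.

(* [dia] is left adjoint to [box], [box] is deflationary and [dia] inflationary.
   Every element [c] with [c `|` neg c = \top] is fixed by both, and so is its
   pseudo-complement; with distributivity this lets [box] and [dia] pass through
   meets and joins with such [c]. Under [box a <= box (box a)] the elements
   [box b] and [dia b] are of this kind, which gives all four identities. *)

Definition complemented (d : Order.disp_t) (L : tbLatticeType d) (neg : L -> L) (c : L) :=
  c `|` neg c = \top.

Section LatticeModalities.

Variables (d : Order.disp_t) (L : tbLatticeType d) (neg : L -> L).
Hypothesis negP : is_meet_compl neg.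

Lemma le_neg (a b : L) : (b <= neg a) = (a `&` b == \bot).
Proof.
have [negM neg_max] := negP a; apply/idP/idP => [b_le | /eqP ab0].
  by rewrite eq_le le0x andbT (le_trans _ (negM \bot)) // leI2.
by apply: neg_max => c; rewrite ab0 le0x.
Qed.

Lemma meet_negr (a : L) : a `&` neg a = \bot.
Proof. by apply/eqP; rewrite -le_neg. Qed.

Lemma neg_le (a b : L) : a <= b -> neg b <= neg a.
Proof. by move=> ab; rewrite le_neg eq_le le0x andbT -(meet_negr b) leI2. Qed.

Lemma complemented_neg (c : L) : complemented neg c -> complemented neg (neg c).
Proof.
rewrite /complemented => c_compl; apply/eqP.
by rewrite eq_le lex1 -c_compl joinC leU2 // le_neg meetC meet_negr.
Qed.

Variables box dia : L -> L.
Hypotheses (boxP : is_box neg box) (diaP : is_dia neg dia).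

Lemma le_box (a x : L) : x <= box a <-> a `|` neg x = \top.
Proof.
have [boxM box_max] := boxP a; split=> [x_le|]; last exact: box_max.
by apply/eqP; rewrite eq_le lex1 -boxM leU2 ?neg_le.
Qed.

Lemma dia_le (a x : L) : dia a <= x <-> neg a `|` x = \top.
Proof.
have [diaM dia_min] := diaP a; split=> [le_x|]; last exact: dia_min.
by apply/eqP; rewrite eq_le lex1 -diaM leU2.
Qed.

Lemma dia_le_box (a x : L) : dia a <= x <-> a <= box x.
Proof.
split=> [/dia_le ax | /le_box xa]; [apply/le_box | apply/dia_le]; by rewrite joinC.
Qed.

Lemma box_homo (a b : L) : a <= b -> box a <= box b.
Proof. by move=> ab; apply/dia_le_box/(le_trans _ ab)/dia_le_box. Qed.

Lemma dia_homo (a b : L) : a <= b -> dia a <= dia b.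
Proof. by move=> ab; apply/dia_le_box/(le_trans ab)/dia_le_box. Qed.

Lemma boxI (a b : L) : box (a `&` b) = box a `&` box b.
Proof.
apply/eqP; rewrite eq_le lexI !box_homo ?leIl ?leIr //=.
by apply/dia_le_box; rewrite lexI; apply/andP; split; apply/dia_le_box;
  [exact: leIl | exact: leIr].
Qed.

Lemma diaU (a b : L) : dia (a `|` b) = dia a `|` dia b.
Proof.
apply/eqP; rewrite eq_le leUx !dia_homo ?leUl ?leUr // !andbT.
by apply/dia_le_box; rewrite leUx; apply/andP; split; apply/(dia_le_box _ _).1;
  [exact: leUl | exact: leUr].
Qed.

End LatticeModalities.

Section DistributiveModalities.

Variables (d : Order.disp_t) (A : tbDistrLatticeType d) (neg box dia : A -> A).
Hypotheses (negP : is_meet_compl neg) (boxP : is_box neg box) (diaP : is_dia neg dia).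

Lemma box_le (a : A) : box a <= a.
Proof.
have /(le_box negP boxP) a_top := lexx (box a).
by rewrite -[leLHS](meetx1 (box a)) -a_top meetUr (meet_negr negP) joinx0 leIr.
Qed.

Lemma le_dia (a : A) : a <= dia a.
Proof.
have /(dia_le diaP) a_top := lexx (dia a).
by rewrite -[leLHS](meetx1 a) -a_top meetUr (meet_negr negP) join0x leIr.
Qed.

Lemma box_complemented (c : A) : complemented neg c -> box c = c.
Proof.
by move=> c_compl; apply/eqP; rewrite eq_le box_le; apply/(le_box negP boxP).
Qed.

Lemma dia_complemented (c : A) : complemented neg c -> dia c = c.
Proof.
move=> c_compl; apply/eqP; rewrite eq_le le_dia andbT.
by apply/(dia_le_box negP boxP diaP); rewrite box_complemented.
Qed.

Lemma box_meetr_complemented (a c : A) :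
  complemented neg c -> box (a `&` c) = box a `&` c.
Proof. by move/box_complemented=> box_c; rewrite (boxI negP boxP diaP) box_c. Qed.

Lemma dia_joinr_complemented (a c : A) :
  complemented neg c -> dia (a `|` c) = dia a `|` c.
Proof. by move/dia_complemented=> dia_c; rewrite (diaU negP boxP diaP) dia_c. Qed.

(* Split [box (a `|` c)] along [c `|` neg c = \top]; the part below [neg c] is
   [box ((a `|` c) `&` neg c) <= box a], because [box (neg c) = neg c]. *)
Lemma box_joinr_complemented (a c : A) :
  complemented neg c -> box (a `|` c) = box a `|` c.
Proof.
move=> c_compl; have box_negc := box_complemented (complemented_neg negP c_compl).
have c_le : c <= box (a `|` c).
  by rewrite -[leLHS](box_complemented c_compl) (box_homo negP boxP diaP) ?leUr.
apply/eqP; rewrite eq_le leUx (box_homo negP boxP diaP) ?leUl // c_le andbT.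
rewrite -[leLHS](meetx1 (box (a `|` c))) -c_compl meetUr joinC leU2 ?leIr //.
rewrite -box_negc -(boxI negP boxP diaP) (box_homo negP boxP diaP) //.
by rewrite meetUl (meet_negr negP) joinx0 leIl.
Qed.

(* Dually, [a] splits into [a `&` c] and [a `&` neg c], and
   [dia (a `&` neg c) <= dia (neg c) = neg c] is disjoint from [c]. *)
Lemma dia_meetr_complemented (a c : A) :
  complemented neg c -> dia (a `&` c) = dia a `&` c.
Proof.
move=> c_compl; have dia_negc := dia_complemented (complemented_neg negP c_compl).
apply/eqP; rewrite eq_le lexI (dia_homo negP boxP diaP) ?leIl //=.
rewrite -[X in _ <= X](dia_complemented c_compl) (dia_homo negP boxP diaP) ?leIr //=.
have a_split : a = (a `&` c) `|` (a `&` neg c) by rewrite -meetUr c_compl meetx1.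
rewrite {1}a_split (diaU negP boxP diaP) meetUl leUx leIl /=.
have dia_le_negc : dia (a `&` neg c) <= neg c.
  by rewrite -[leRHS]dia_negc (dia_homo negP boxP diaP) ?leIr.
by rewrite (le_trans (leI2 dia_le_negc (lexx c))) // meetC (meet_negr negP) le0x.
Qed.

Hypothesis box4 : forall a : A, box a <= box (box a).

Lemma box_idem (a : A) : box (box a) = box a.
Proof. by apply/eqP; rewrite eq_le box_le box4. Qed.

Lemma dia_idem (a : A) : dia (dia a) = dia a.
Proof.
apply/eqP; rewrite eq_le le_dia andbT.
have adj := dia_le_box negP boxP diaP.
by do 2 apply/adj; rewrite box_idem; apply/adj.
Qed.

Lemma complemented_box (b : A) : complemented neg (box b).
Proof. by apply/(le_box negP boxP); rewrite box_idem. Qed.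

Lemma complemented_dia (b : A) : complemented neg (dia b).
Proof. by rewrite /complemented joinC; apply/(dia_le diaP); rewrite dia_idem. Qed.

End DistributiveModalities.

Theorem proposition24 (d : Order.disp_t) (A : tbDistrLatticeType d)
  (neg box dia : A -> A)
  (Hneg : is_meet_compl neg) (Hbox : is_box neg box) (Hdia : is_dia neg dia)
  (H4 : forall a : A, box a <= box (box a)) :
  forall a b : A,
    [/\ box (a `&` dia b) = box a `&` dia b,
        dia (a `|` box b) = dia a `|` box b,
        box (a `|` box b) = box a `|` box b &
        dia (a `&` dia b) = dia a `&` dia b].
Proof.
move=> a b.
have cbox := complemented_box Hneg Hbox H4 b.
have cdia := complemented_dia Hneg Hbox Hdia H4 b.
split.
- exact: box_meetr_complemented.
- exact: dia_joinr_complemented.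
- exact: box_joinr_complemented.
- exact: dia_meetr_complemented.
Qed.
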